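(* Let $R$ be a noetherian integral domain, $n\ge1$, $R[n]=R[t]/(t^n)$, and $M$ an $R[n]$-module of finite type. Let $M^\vee=\mathrm{Hom}_{R[n]}(M,R[n])$ and let $t_M:M\to M^{\vee\vee}$ be the canonical morphism, $t_M(m)(\phi)=\phi(m)$. Then $\ker(t_M)=T(M)$.
   Context: An element $u=\sum_{i=0}^{n-1}u_it^i\in R[n]$ ($u_i\in R$) is a non-zero-divisor iff $u_0\ne0$; let $S_n$ be the set of non-zero-divisors. The torsion submodule $T(M)$ is the set of $m\in M$ such that $\alpha m=0$ for some $\alpha\in S_n$. *)

From HB Require Import structures.
From mathcomp Require Import all_boot all_order all_algebra.
From mathcomp Require Export qpoly.
Set Implicit Arguments. Unset Strict Implicit. Unset Printing Implicit Defensive.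
Import GRing.Theory.
Local Open Scope ring_scope.

Definition is_ideal (R : comNzRingType) (I : R -> Prop) : Prop :=
  [/\ I 0,
      (forall x y, I x -> I y -> I (x + y)) &
      (forall r x, I x -> I (r * x))].

Definition noetherian (R : comNzRingType) : Prop :=
  forall I : R -> Prop, is_ideal I ->
    exists s : seq R, forall x, I x <->
      exists cs : seq R, size cs = size s /\ x = \sum_(i < size s) cs`_i * s`_i.

(* R[n] = R[t]/(t^n), realised as the quotient ring {poly %/ 'X^n}. *)
Notation truncpoly R n := {poly %/ ('X^n : {poly R})}.

Definition finite_type_mod (A : pzRingType) (M : lmodType A) : Prop :=
  exists s : seq M, forall m : M,
    exists cs : seq A, size cs = size s /\ m = \sum_(i < size s) cs`_i *: s`_i.

Definition nonzerodivisor (A : pzRingType) (u : A) : Prop :=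
  forall v : A, u * v = 0 -> v = 0.

Definition torsion (A : pzRingType) (M : lmodType A) (m : M) : Prop :=
  exists alpha : A, nonzerodivisor alpha /\ alpha *: m = 0.

(* M^vee = Hom_A(M, A) is the type {linear M -> A^o}; the canonical map
   t_M : M -> M^{vee vee}, t_M(m)(phi) = phi(m). *)
Definition t_M (A : pzRingType) (M : lmodType A) (m : M) :
  {linear M -> A^o} -> A := fun phi => phi m.

Definition ker_tM (A : pzRingType) (M : lmodType A) (m : M) : Prop :=
  t_M m = (fun _ => 0).

From HB Require Import structures.
From mathcomp Require Import all_boot all_order all_algebra.
From mathcomp Require Import qpoly zify.
From Stdlib Require Import Classical ClassicalEpsilon FunctionalExtensionality.
Set Implicit Arguments. Unset Strict Implicit. Unset Printing Implicit Defensive.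
Import GRing.Theory Pdiv.RingMonic.
Local Open Scope ring_scope.

(* If [alpha] is a non-zero-divisor with [alpha *: m = 0], then every
   [phi : M -> R[n]] satisfies [alpha * phi m = phi (alpha *: m) = 0], so
   [phi m = 0].  Conversely, if [m] is not torsion then [a *: m <> 0] for every
   nonzero [a : R], since such an [a] is a non-zero-divisor of [R[n]].  As an
   R-module, [M] is generated by the [t^j *: s_i]; adding these generators one
   at a time to [R m] we extend an R-linear [lam] with [lam m <> 0]: if some
   nonzero multiple [d *: x] of the new generator already lies in the current
   submodule, replace [lam] by [lam (d *: _)], otherwise the sum with [R x] is
   direct and [lam] extends by [0] on [x].  Finally
   [phi x = \sum_j lam (t^j *: x) t^(n-1-j)] is R[n]-linear and the coefficient
   of [t^(n-1)] in [phi x] is [lam x], so [phi m <> 0]. *)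

Section Span.
Variables (R : pzRingType) (V : lmodType R).

Definition submodule (S : V -> Prop) :=
  S 0 /\ forall a y z, S y -> S z -> S (a *: y + z).

Definition add_line (S : V -> Prop) (x : V) : V -> Prop :=
  fun y => exists w a, S w /\ y = w + a *: x.

Definition linspan (g : seq V) : V -> Prop := foldl add_line (fun v => v = 0) g.

Lemma submodule_add_line S x : submodule S -> submodule (add_line S x).
Proof.
move=> [S0 Slin]; split; first by exists 0, 0; rewrite scale0r addr0.
move=> a _ _ [w [b [Sw ->]]] [w' [c [Sw' ->]]].
exists (a *: w + w'), (a * b + c); split; first exact: Slin.
by rewrite scalerDr scalerDl scalerA addrACA.
Qed.

Lemma submodule_foldl S g : submodule S -> submodule (foldl add_line S g).
Proof. by elim: g S => [|x g IHg] S //= /(submodule_add_line x)/IHg. Qed.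

Lemma sub_add_line S x v : S v -> add_line S x v.
Proof. by exists v, 0; rewrite scale0r addr0. Qed.

Lemma sub_foldl_add_line S g v : S v -> foldl add_line S g v.
Proof. by elim: g S => [|x g IHg] S //= /(sub_add_line x)/IHg. Qed.

Lemma mem_foldl_add_line S g x : submodule S -> x \in g -> foldl add_line S g x.
Proof.
elim: g S => [|y g IHg] S //= subS; rewrite inE => /predU1P[->|xg].
  apply: sub_foldl_add_line; exists 0, 1; split; first by case: subS.
  by rewrite scale1r add0r.
exact/IHg/xg/submodule_add_line.
Qed.

Lemma foldl_add_line_min (T : V -> Prop) S g : submodule T ->
  (forall v, S v -> T v) -> (forall x, x \in g -> T x) ->
  forall v, foldl add_line S g v -> T v.
Proof.
move=> [_ Tlin]; elim: g S => [|x g IHg] S //= ST gT.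
apply: IHg => [_ [w [a [Sw ->]]]|y yg]; last by apply: gT; rewrite inE yg orbT.
by rewrite addrC; apply: Tlin; [apply: gT; rewrite inE eqxx | exact: ST].
Qed.

Lemma submodule_linspan g : submodule (linspan g).
Proof. apply: submodule_foldl; split=> // a _ _ -> ->; by rewrite scaler0 addr0. Qed.

Lemma mem_linspan g x : x \in g -> linspan g x.
Proof. by apply: mem_foldl_add_line; split=> // a _ _ -> ->; rewrite scaler0 addr0. Qed.

Lemma linspan_min (T : V -> Prop) g : submodule T -> (forall x, x \in g -> T x) ->
  forall v, linspan g v -> T v.
Proof. by move=> subT; apply: foldl_add_line_min => // [_ ->]; case: subT. Qed.

Lemma submodule_sum S (I : Type) (r : seq I) (P : pred I) (F : I -> V) :
  submodule S -> (forall i, P i -> S (F i)) -> S (\sum_(i <- r | P i) F i).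
Proof.
move=> [S0 Slin] SF; elim/big_ind: _ => // y z Sy Sz.
by rewrite -[y]scale1r; apply: Slin.
Qed.

Lemma submodule_scale S a v : submodule S -> S v -> S (a *: v).
Proof. by move=> [S0 Slin] Sv; rewrite -[_ *: v]addr0; apply: Slin. Qed.

End Span.

Arguments add_line {R V}.

Definition restrict_scalars (R : pzRingType) (A : lalgType R) (M : lmodType A) : Type :=
  M.

Section RestrictScalars.
Variables (R : pzRingType) (A : lalgType R) (M : lmodType A).

HB.instance Definition _ := GRing.Zmodule.on (restrict_scalars M).

Definition restrict_scale (a : R) (x : restrict_scalars M) : restrict_scalars M :=
  a%:A *: (x : M).

Fact restrict_scaleA a b x :
  restrict_scale a (restrict_scale b x) = restrict_scale (a * b) x.
Proof. by rewrite /restrict_scale scalerA mulr_algl scalerA. Qed.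

Fact restrict_scale1 : left_id 1 restrict_scale.
Proof. by move=> x; rewrite /restrict_scale scale1r scale1r. Qed.

Fact restrict_scaleDr : right_distributive restrict_scale +%R.
Proof. by move=> a x y; rewrite /restrict_scale scalerDr. Qed.

Fact restrict_scaleDl x : {morph restrict_scale^~ x : a b / a + b}.
Proof. by move=> a b; rewrite /restrict_scale scalerDl scalerDl. Qed.

HB.instance Definition _ := GRing.Zmodule_isLmodule.Build R (restrict_scalars M)
  restrict_scaleA restrict_scale1 restrict_scaleDr restrict_scaleDl.

Lemma restrict_scaleE a (x : M) : a *: (x : restrict_scalars M) = a%:A *: x.
Proof. by []. Qed.

Lemma linspan_restrict_scalars (b : seq A) : (forall c : A, linspan b c) ->
  finite_type_mod M -> exists g, forall v : restrict_scalars M, linspan g v.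
Proof.
move=> b_spans [s s_gen].
pose g : seq (restrict_scalars M) := [seq c *: x | x <- s, c <- b].
have [g0 glin] := submodule_linspan g.
exists g => v; have [cs [_ ->]] := s_gen v.
suff gen_i (i : 'I_(size s)) : linspan g (cs`_i *: s`_i : restrict_scalars M).
  exact: submodule_sum (submodule_linspan g) (fun i _ => gen_i i).
pose T c := linspan g (c *: s`_i : restrict_scalars M).
apply: (linspan_min (T := T) _ _ (b_spans cs`_i)) => [|c cb].
  split=> [|a c c' Tc Tc']; first by rewrite /T scale0r.
  by rewrite /T scalerDl -mulr_algl -scalerA; apply: glin.
by apply/mem_linspan/allpairs_f => //; apply: mem_nth.
Qed.

End RestrictScalars.

Section Functionals.
Variables (R : idomainType) (V : lmodType R).
Implicit Types (S : V -> Prop) (lam : V -> R).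

Definition linear_on S lam :=
  forall a y z, S y -> S z -> lam (a *: y + z) = a * lam y + lam z.

Lemma linear_on0 S lam : submodule S -> linear_on S lam -> lam 0 = 0.
Proof.
move=> [S0 _] /(_ 1 0 0 S0 S0); rewrite scaler0 addr0 mul1r => /eqP.
by rewrite eq_sym -subr_eq0 addrK => /eqP.
Qed.

Lemma linear_onZ S lam a y : submodule S -> linear_on S lam -> S y ->
  lam (a *: y) = a * lam y.
Proof.
move=> subS lin Sy; have S0 : S 0 by case: subS.
by rewrite -[a *: y]addr0 lin // (linear_on0 subS lin) addr0.
Qed.

Lemma linear_on_add_free_line S lam x c : submodule S -> linear_on S lam ->
    (forall d, S (d *: x) -> d = 0) ->
  exists2 lam', linear_on (add_line S x) lam' &
    forall w a, S w -> lam' (w + a *: x) = lam w + a * c.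
Proof.
move=> [S0 Slin] lin free.
have dec_uniq w1 w2 a1 a2 : S w1 -> S w2 -> w1 + a1 *: x = w2 + a2 *: x ->
    w1 = w2 /\ a1 = a2.
  move=> Sw1 Sw2 E; suff a12 : a1 = a2 by move: E; rewrite a12 => /addIr.
  apply/eqP; rewrite -subr_eq0; apply/eqP/free.
  suff -> : (a1 - a2) *: x = (-1) *: w1 + w2 by apply: Slin.
  by apply/eqP; rewrite scaleN1r scalerBl subr_eq -addrA -E addKr.
pose decomposes y (p : V * R) := S p.1 /\ y = p.1 + p.2 *: x.
pose dec y := epsilon (inhabits (0, 0)) (decomposes y).
pose lam' y := lam (dec y).1 + (dec y).2 * c.
have lam'E w a : S w -> lam' (w + a *: x) = lam w + a * c.
  move=> Sw; have [Sd E] : decomposes (w + a *: x) (dec (w + a *: x)).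
    by apply: epsilon_spec; exists (w, a).
  by rewrite /lam'; have [<- <-] := dec_uniq _ _ _ _ Sw Sd E.
exists lam' => // a _ _ [w [b [Sw ->]]] [w' [b' [Sw' ->]]].
have -> : a *: (w + b *: x) + (w' + b' *: x) = (a *: w + w') + (a * b + b') *: x.
  by rewrite scalerDr scalerDl scalerA addrACA.
rewrite !lam'E ?lin //; last exact: Slin.
by rewrite mulrDl mulrDr mulrA addrACA.
Qed.

Lemma linear_on_add_torsion_line S lam x d : submodule S -> linear_on S lam ->
  S (d *: x) -> linear_on (add_line S x) (fun y => lam (d *: y)).
Proof.
move=> subS lin Sdx.
have Sd y : add_line S x y -> S (d *: y).
  move=> [w [a [Sw ->]]]; rewrite scalerDr scalerA mulrC -scalerA addrC.
  by have [_ Slin] := subS; apply: Slin => //; apply: submodule_scale.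
move=> a y z Ly Lz /=.
by rewrite scalerDr scalerA mulrC -scalerA lin //; apply: Sd.
Qed.

Lemma extend_functional S lam x m : submodule S -> S m -> linear_on S lam ->
  lam m != 0 -> exists2 lam', linear_on (add_line S x) lam' & lam' m != 0.
Proof.
move=> subS Sm lin lam_m.
have [[d [d_neq0 Sdx]] | no_torsion] := classic (exists d, d != 0 /\ S (d *: x)).
  exists (fun y => lam (d *: y)); first exact: linear_on_add_torsion_line.
  by rewrite (linear_onZ _ subS) // mulf_neq0.
have free d : S (d *: x) -> d = 0.
  by move=> Sdx; apply/eqP/contraT => d_neq0; case: no_torsion; exists d.
have [lam' lin' lam'E] := linear_on_add_free_line 0 subS lin free.
by exists lam' => //; rewrite -[m]addr0 -(scale0r x) lam'E // mul0r addr0.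
Qed.

Lemma extend_functional_foldl g S lam m : submodule S -> S m ->
    linear_on S lam -> lam m != 0 ->
  exists2 lam', linear_on (foldl add_line S g) lam' & lam' m != 0.
Proof.
elim: g S lam => [|x g IHg] S lam subS Sm lin lam_m /=; first by exists lam.
have [lam' lin' lam'_m] := extend_functional x subS Sm lin lam_m.
by apply: (IHg _ lam') => //; [apply: submodule_add_line | apply: sub_add_line].
Qed.

Lemma nonzero_functional (g : seq V) (m : V) : (forall v, linspan g v) ->
  (forall a, a *: m = 0 -> a = 0) -> exists lam : {linear V -> R^o}, lam m != 0.
Proof.
move=> spanning m_free.
have sub0 : submodule (fun v : V => v = 0).
  by split=> // a _ _ -> ->; rewrite scaler0 addr0.
have lin0 : linear_on (fun v : V => v = 0) (fun _ => 0).
  by move=> *; rewrite mulr0 addr0.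
have [lam0 lin_lam0 lam0E] := linear_on_add_free_line 1 sub0 lin0 m_free.
have on_line : add_line (fun v : V => v = 0) m m by exists 0, 1; rewrite scale1r add0r.
have lam0_m : lam0 m != 0.
  by rewrite -[m]add0r -[m in 0 + m]scale1r lam0E // mul1r add0r oner_eq0.
have [lam lin lam_m] :=
  extend_functional_foldl g (submodule_add_line m sub0) on_line lin_lam0 lam0_m.
have span_mg v : linspan (m :: g) v.
  apply: linspan_min (spanning v) => [|x xg]; first exact: submodule_linspan.
  by apply: mem_linspan; rewrite inE xg orbT.
have lam_linear : linear (lam : V -> R^o).
  by move=> a y z; apply: lin; apply: span_mg.
by exists (HB.pack_for {linear V -> R^o} (lam : V -> R^o)
  (GRing.isLinear.Build _ _ _ _ _ lam_linear)).
Qed.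

End Functionals.

Lemma big_ord_shift_vanishing (V : nmodType) N (F : nat -> V) :
  F 0%N = 0 -> F N = 0 -> \sum_(i < N) F i.+1 = \sum_(i < N) F i.
Proof.
case: N => [|N] F0 FN; first by rewrite !big_ord0.
by rewrite big_ord_recr big_ord_recl /= FN F0 addr0 add0r.
Qed.

Section TruncatedPolynomials.
Context {R : comNzRingType} {n : nat}.
Hypothesis n_gt0 : (0 < n)%N.
Local Notation A := (truncpoly R n).
Local Notation t := ('qX : A).

Lemma mk_monic_Xn_gt0 : mk_monic ('X^n : {poly R}) = 'X^n.
Proof. by rewrite mk_monic_Xn prednK. Qed.

Lemma size_truncpoly (c : A) : (size (c : {poly R}) <= n)%N.
Proof. by apply: leq_trans (size_npoly c) _; rewrite mk_monic_Xn_gt0 size_polyXn. Qed.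

Lemma qX_exp k : t ^+ k = in_qpoly ('X^n : {poly R}) 'X^k.
Proof. by rewrite rmorphXn. Qed.

Lemma val_qX_exp k : (k < n)%N -> (t ^+ k : {poly R}) = 'X^k.
Proof. by move=> kn; rewrite qX_exp in_qpoly_small // mk_monic_Xn_gt0 !size_polyXn. Qed.

Lemma qX_exp_n : t ^+ n = 0.
Proof.
by apply: val_inj; rewrite qX_exp /= mk_monic_Xn_gt0 rmodpp // monicXn.
Qed.

Lemma coef_scale_qX_exp (a : R) k i : (k < n)%N ->
  (a *: t ^+ k : {poly R})`_i = a * (i == k)%:R.
Proof. by move=> lt_kn; rewrite poly_of_qpolyZ coefZ val_qX_exp // coefXn. Qed.

Lemma truncpoly_expansion (c : A) : c = \sum_(i < n) (c : {poly R})`_i *: t ^+ i.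
Proof.
have cE : c = in_qpoly _ (\sum_(i < n) (c : {poly R})`_i *: 'X^i).
  rewrite -poly_def -/(take_poly n c) take_poly_id ?size_truncpoly //.
  by apply: val_inj; symmetry; exact: in_qpoly_small (size_mk_monic c).
by rewrite {1}cE linear_sum; apply: eq_bigr => i _; rewrite linearZ qX_exp.
Qed.

Lemma linspan_qX_exp (c : A) : linspan [seq t ^+ i | i <- iota 0 n] c.
Proof.
have gen_i (i : 'I_n) :
    linspan [seq t ^+ i | i <- iota 0 n] ((c : {poly R})`_i *: t ^+ i).
  apply/(submodule_scale _ (submodule_linspan _))/mem_linspan/map_f.
  by rewrite mem_iota add0n ltn_ord.
rewrite (truncpoly_expansion c).
exact: submodule_sum (submodule_linspan _) (fun i _ => gen_i i).
Qed.

End TruncatedPolynomials.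

Section LiftFunctional.
Context {R : comNzRingType} {n : nat}.
Hypothesis n_gt0 : (0 < n)%N.
Local Notation A := (truncpoly R n).
Local Notation t := ('qX : A).
Variables (M : lmodType A) (lam : {linear restrict_scalars M -> R^o}).

(* Inverse of [Hom_A(M, A) -> Hom_R(M, R)], [phi |-> coefficient of t^(n-1) of phi]. *)
Definition lift_functional (x : M) : A :=
  \sum_(i < n) lam (t ^+ i *: x) *: t ^+ (n - i.+1).

Lemma lift_functionalD x y :
  lift_functional (x + y) = lift_functional x + lift_functional y.
Proof.
rewrite -big_split; apply: eq_bigr => i _ /=.
by rewrite scalerDr linearD scalerDl.
Qed.

Lemma lift_functional0 : lift_functional 0 = 0.
Proof. by rewrite /lift_functional big1 // => i _; rewrite scaler0 linear0 scale0r. Qed.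

Lemma lift_functional_scale a x :
  lift_functional (a%:A *: x) = a%:A * lift_functional x.
Proof.
rewrite /lift_functional mulr_sumr; apply: eq_bigr => i _.
rewrite scalerA mulrC -scalerA -restrict_scaleE linearZ.
by rewrite mulr_algl scalerA.
Qed.

Lemma lift_functional_qX x : lift_functional (t *: x) = t * lift_functional x.
Proof.
rewrite /lift_functional mulr_sumr.
under eq_bigr do rewrite scalerA -exprSr.
under [RHS]eq_bigr => i _ do rewrite -scalerAr -exprS subnSK //.
apply: (big_ord_shift_vanishing (F := fun i => lam (t ^+ i *: x) *: t ^+ (n - i))).
  by rewrite subn0 (qX_exp_n n_gt0) scaler0.
by rewrite (qX_exp_n n_gt0) scale0r linear0 scale0r.
Qed.

Lemma lift_functional_qX_exp k x :
  lift_functional (t ^+ k *: x) = t ^+ k * lift_functional x.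
Proof.
elim: k x => [|k IHk] x; first by rewrite !expr0 scale1r mul1r.
by rewrite exprS -scalerA lift_functional_qX IHk mulrA.
Qed.

Lemma lift_functionalZ c x : lift_functional (c *: x) = c * lift_functional x.
Proof.
rewrite (truncpoly_expansion n_gt0 c) scaler_suml mulr_suml.
rewrite (big_morph _ lift_functionalD lift_functional0); apply: eq_bigr => i _.
by rewrite -mulr_algl -scalerA lift_functional_scale lift_functional_qX_exp mulrA.
Qed.

Fact lift_functional_is_linear : linear (lift_functional : M -> A^o).
Proof. by move=> c x y; rewrite lift_functionalD lift_functionalZ. Qed.

Definition lift_linear : {linear M -> A^o} :=
  HB.pack_for {linear M -> A^o} lift_functional
    (GRing.isLinear.Build A M A^o *:%R lift_functional lift_functional_is_linear).

Lemma coef_lift_functional x : (lift_functional x : {poly R})`_n.-1 = lam x.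
Proof.
rewrite /lift_functional poly_of_qpoly_sum coef_sum (bigD1 (Ordinal n_gt0)) //=.
rewrite coef_scale_qX_exp ?subn1 ?ltn_predL // eqxx mulr1 expr0 scale1r.
rewrite big1 ?addr0 // => i i_neq0; rewrite coef_scale_qX_exp ?ltn_subrL //.
suff /negPf -> : n.-1 != (n - i.+1)%N by rewrite mulr0.
by move: i_neq0 (ltn_ord i); rewrite -val_eqE /=; lia.
Qed.

Lemma lift_functional_eq0 x : lift_functional x = 0 -> lam x = 0.
Proof. by rewrite -coef_lift_functional => ->; exact (coef0 _ _). Qed.

End LiftFunctional.

Lemma torsion_ker_tM (A : pzRingType) (M : lmodType A) (m : M) :
  torsion m -> ker_tM m.
Proof.
move=> [alpha [alpha_nzd alpha_m]]; apply: functional_extensionality => f.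
by apply: alpha_nzd; rewrite /t_M -[_ * _]linearZ alpha_m linear0.
Qed.

Lemma nonzerodivisor_scalar (R : idomainType) n (a : R) :
  a != 0 -> nonzerodivisor (a%:A : truncpoly R n).
Proof.
move=> a_neq0 c; rewrite mulr_algl.
move=> /(congr1 (fun c : truncpoly R n => c : {poly R})); rewrite poly_of_qpolyZ.
by move=> /eqP; rewrite scale_poly_eq0 (negPf a_neq0) => /eqP c0; apply: val_inj.
Qed.

Theorem proposition3p5p2 (R : idomainType) (n : nat) (M : lmodType (truncpoly R n)) :
  noetherian R -> (0 < n)%N -> finite_type_mod M ->
  forall m : M, ker_tM m <-> torsion m.
Proof.
move=> _ n_gt0 M_fin m; split; last exact: torsion_ker_tM.
move=> ker_m; apply: NNPP => not_torsion.
have m_free (a : R) : a *: (m : restrict_scalars M) = 0 -> a = 0.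
  move=> am0; apply/eqP/contraT => a_neq0; case: not_torsion.
  by exists a%:A; split; [exact: nonzerodivisor_scalar|].
have [g g_spans] := linspan_restrict_scalars (linspan_qX_exp n_gt0) M_fin.
have [lam /negP[]] := nonzero_functional g_spans m_free.
apply/eqP/(lift_functional_eq0 n_gt0).
exact: equal_f ker_m (lift_linear n_gt0 lam).
Qed.
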